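(* Let $n \ge 3$. The commutator subgroup $TW_n'$ has the following presentation. Generators: $\beta(S;j)$ for every $j \in \{1,\dots,n-2\}$ and every (possibly empty) subset $S \subseteq \{1,\dots,j-1\}$. Defining relations: for every $t \in \{1,\dots,n-2\}$, every $j$ with $1 \le j \le t-2$, and every subset $S \subseteq \{1,\dots,t-1\}$: (i) if $j \in S$ and $j+1 \notin S$, then $\beta(S;t) = \beta(S\setminus\{j\};t)$; (ii) if $j \in S$ and $j+1 \in S$, then, writing $S_{<j} = \{i \in S : i < j\}$, $$\beta(S;t) = \beta(S_{<j};j)^{-1}\,\beta(S\setminus\{j\};t)\,\beta(S_{<j};j).$$ Here the generator $\beta(S;j)$ corresponds to the element of $TW_n$ defined in the context.
   Context: For $n \ge 2$, the twin group $TW_n$ is the group with generators $\tau_1,\dots,\tau_{n-1}$ and defining relations $\tau_i^2=1$ for all $i$, and $\tau_i\tau_j=\tau_j\tau_i$ whenever $|i-j|>1$. $G'$ denotes the commutator subgroup of a group $G$. For $1 \le j \le n-2$ and a subset $S=\{i_1<i_2<\dots<i_s\} \subseteq \{1,\dots,j-1\}$ (possibly empty), define $$\beta(S;j) := \tau_{i_1}\tau_{i_2}\cdots\tau_{i_s}\,(\tau_{j+1}\tau_j\tau_{j+1}\tau_j)\,\tau_{i_s}\cdots\tau_{i_2}\tau_{i_1}\in TW_n,$$ so that $\beta(\emptyset;j)=\tau_{j+1}\tau_j\tau_{j+1}\tau_j$. *)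

(* Groups given by presentations are modelled concretely as
   words in generators and inverses modulo the congruence generated by free
   cancellation and the defining relations. *)
From mathcomp Require Import all_boot.
Set Implicit Arguments. Unset Strict Implicit. Unset Printing Implicit Defensive.

(* A word: a letter (a, false) is a, (a, true) is a^-1. *)
Definition word (A : Type) := seq (A * bool).

Definition winv (A : Type) (w : word A) : word A :=
  rev (map (fun p => (p.1, ~~ p.2)) w).

Inductive geqv (A : Type) (R : word A -> word A -> Prop) : word A -> word A -> Prop :=
| ge_refl w : geqv R w w
| ge_sym u v : geqv R u v -> geqv R v u
| ge_trans u v w : geqv R u v -> geqv R v w -> geqv R u w
| ge_cat u u' v v' : geqv R u u' -> geqv R v v' -> geqv R (u ++ v) (u' ++ v')
| ge_cancel (a : A) (b : bool) : geqv R [:: (a, b); (a, ~~ b)] [::]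
| ge_rel u v : R u v -> geqv R u v.

Definition tw_gen (n : nat) := {i : nat | (0 < i < n)%N}.

Definition RTW (n : nat) (u v : word (tw_gen n)) : Prop :=
  (exists i : tw_gen n, u = [:: (i, false); (i, false)] /\ v = [::]) \/
  (exists i j : tw_gen n,
      ((val i).+1 < val j \/ (val j).+1 < val i)%N /\
      u = [:: (i, false); (j, false)] /\ v = [:: (j, false); (i, false)]).

(* the word tau_k (k is always a valid index where used) *)
Definition tau (n k : nat) : word (tw_gen n) :=
  match insub k with Some x => [:: (x, false)] | None => [::] end.

Definition wcomm (A : Type) (x y : word A) : word A :=
  winv x ++ winv y ++ x ++ y.

Definition in_commutator (n : nat) (u : word (tw_gen n)) : Prop :=
  exists ps : seq (word (tw_gen n) * word (tw_gen n)),
    geqv (@RTW n) u (flatten (map (fun p => wcomm p.1 p.2) ps)).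

Definition bgen_ok (n : nat) (p : seq nat * nat) : bool :=
  [&& (0 < p.2)%N, (p.2 <= n.-2)%N, sorted ltn p.1 &
      all (fun i => (0 < i < p.2)%N) p.1].

Definition bgen (n : nat) := {p : seq nat * nat | bgen_ok n p}.

Definition beta_word (n : nat) (S : seq nat) (j : nat) : word (tw_gen n) :=
  flatten (map (tau n) S) ++ tau n j.+1 ++ tau n j ++ tau n j.+1 ++ tau n j
  ++ flatten (map (tau n) (rev S)).

Definition beta (n : nat) (g : bgen n) : word (tw_gen n) :=
  beta_word n (val g).1 (val g).2.

Definition ev (n : nat) (w : word (bgen n)) : word (tw_gen n) :=
  flatten (map (fun p => if p.2 then winv (beta p.1) else beta p.1) w).

Definition RB (n : nat) (u v : word (bgen n)) : Prop :=
  exists (g g' h : bgen n) (j : nat),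
    let S := (val g).1 in let t := (val g).2 in
    [/\ (0 < j)%N, (j.+2 <= t)%N,
        val g' = (filter (predC1 j) S, t),
        val h = (filter (fun i => (i < j)%N) S, j) &
        ((j \in S /\ j.+1 \notin S /\ u = [:: (g, false)] /\ v = [:: (g', false)])
         \/
         (j \in S /\ j.+1 \in S /\ u = [:: (g, false)] /\
          v = [:: (h, true); (g', false); (h, false)]))].

(* TW_n / TW_n' is elementary abelian of rank n-1: the coset of a word in the
   tau_i is labelled by the set T of indices occurring an odd number of times.
   The words M_T = tau_{i_1} ... tau_{i_k} (i_1 < ... < i_k the elements of T)
   form a Schreier transversal, and M_T tau_i = s(T,i) M_{T + i}, where
   s(T,i) = beta(T /\ [1,i-1]; i)^{+-1} if i+1 is in T (inverted iff i is in T)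
   and s(T,i) = 1 otherwise.  Reading a word letter by letter from M_0 = 1 thus
   rewrites it, up to the final M_T, as a word in the beta's.  This rewriting
   turns tau_i^2 = 1 into a free cancellation and the commutation of distant
   tau_i, tau_j into relation (i) or (ii), and it sends beta(S;j) back to
   beta(S;j); hence it inverts the evaluation map modulo (i) and (ii).  A word
   of TW_n' ends in the coset M_0, so it equals the evaluation of its rewriting. *)

From mathcomp Require Import all_boot zify.
From Stdlib Require Import Setoid Morphisms FunctionalExtensionality Lia.
Set Implicit Arguments. Unset Strict Implicit. Unset Printing Implicit Defensive.

Section GroupWords.
Variables (A : Type) (R : word A -> word A -> Prop).

Lemma geqv_cat_proper : Proper (geqv R ==> geqv R ==> geqv R) (@cat (A * bool)).
Proof. by move=> u u' Hu v v' Hv; apply: ge_cat. Qed.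

Lemma geqv_cons_proper (a : A * bool) : Proper (geqv R ==> geqv R) (cons a).
Proof. by move=> u u' Hu; apply: (ge_cat (ge_refl R [:: a]) Hu). Qed.
End GroupWords.

Add Parametric Relation (A : Type) (R : word A -> word A -> Prop) : (word A) (geqv R)
  reflexivity proved by (@ge_refl A R)
  symmetry proved by (@ge_sym A R)
  transitivity proved by (@ge_trans A R) as geqv_rel.
Existing Instance geqv_cat_proper.
Existing Instance geqv_cons_proper.
#[export] Hint Resolve ge_refl : core.

Section WordInverse.
Variables (A : Type) (R : word A -> word A -> Prop).
Local Notation "u === v" := (geqv R u v) (at level 70).

Lemma winv_cat (u v : word A) : winv (u ++ v) = winv v ++ winv u.
Proof. by rewrite /winv map_cat rev_cat. Qed.

Lemma winvK : involutive (@winv A).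
Proof.
move=> u; rewrite /winv map_rev revK -map_comp.
by elim: u => [|[a b] u IH] //=; rewrite negbK IH.
Qed.

Lemma cancel_cons (a : A) (b : bool) (w : word A) : (a, b) :: (a, ~~ b) :: w === w.
Proof. exact: (ge_cat (ge_cancel R a b) (ge_refl R w)). Qed.

Lemma catwV (u : word A) : u ++ winv u === [::].
Proof.
elim: u => [|[a b] u IH]; first exact: ge_refl.
rewrite -cat1s winv_cat catA -(catA [:: _]) IH cats0; exact: ge_cancel.
Qed.

Lemma catVw (u : word A) : winv u ++ u === [::].
Proof. by have := catwV (winv u); rewrite winvK. Qed.

Lemma catwVK (u w : word A) : u ++ (winv u ++ w) === w.
Proof. by rewrite catA catwV. Qed.

Lemma geqv_winv (u v : word A) : u === v -> winv u === winv v.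
Proof.
move=> H; transitivity (winv u ++ (v ++ winv v)); first by rewrite catwV cats0.
by rewrite catA (ge_cat (ge_cat (ge_refl R _) (ge_sym H)) (ge_refl R _)) catVw.
Qed.

Lemma geqv_conj (a b : A) (x : word A) (c : bool) :
  [:: (a, false)] === x ++ [:: (b, false)] ++ winv x ->
  (a, c) :: x === x ++ [:: (b, c)].
Proof.
case: c => H; last by rewrite -cat1s H -!catA catVw cats0.
have {}H := geqv_winv H; rewrite !winv_cat winvK -catA in H.
by rewrite -cat1s -[[:: (a, true)]]/(winv [:: (a, false)]) H -!catA catVw cats0.
Qed.

Lemma geqv_comm_winv (x y z : word A) :
  winv x ++ y === z ++ winv x -> x ++ z === y ++ x.
Proof.
move=> H; transitivity (x ++ (z ++ winv x) ++ x).
  by rewrite -catA catVw cats0.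
by rewrite -H catA catwVK.
Qed.
End WordInverse.

Definition far (a b : nat) := (a.+1 < b) || (b.+1 < a).

Lemma sorted_ltn_split (S : seq nat) j : sorted ltn S -> j \in S ->
  exists A B, [/\ S = A ++ j :: B, all (fun x => x < j) A & all (fun x => j < x) B].
Proof.
move=> sS jS; case/splitPr: jS sS => A B.
rewrite (sorted_pairwise ltn_trans) pairwise_cat /= => /and3P [/allrelP AjB _ /andP [jB _]].
exists A, B; split => //; apply/allP => x xA; exact: AjB x j xA (mem_head _ _).
Qed.

Lemma sorted_ltn_succ (B : seq nat) j : sorted ltn (j :: B) -> j.+1 \in B ->
  exists B', B = j.+1 :: B' /\ all (fun x => j.+1 < x) B'.
Proof.
case: B => [//|b B] /= /andP [jb bB]; have := order_path_min ltn_trans bB.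
rewrite inE => bB_gt /orP [/eqP eb|j1B]; first by subst b; exists B.
by have := allP bB_gt _ j1B; lia.
Qed.

Section TwinGroup.
Variable n : nat.
Local Notation "u =t= v" := (geqv (@RTW n) u v) (at level 70).
Local Notation taus S := (flatten (map (tau n) S)).

Lemma tau_valid k (k_ok : 0 < k < n) : tau n k = [:: (exist _ k k_ok : tw_gen n, false)].
Proof. by rewrite /tau (insubT (fun k => 0 < k < n) k_ok). Qed.

Lemma tau_invalid k : ~~ (0 < k < n) -> tau n k = [::].
Proof. by move=> H; rewrite /tau insubF //; apply/negbTE. Qed.

Lemma tau_val (x : tw_gen n) : tau n (val x) = [:: (x, false)].
Proof. by rewrite /tau valK. Qed.

Lemma tau_tau k : tau n k ++ tau n k =t= [::].
Proof.
case k_ok: (0 < k < n); last by rewrite tau_invalid ?k_ok.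
by rewrite tau_valid; apply: ge_rel; left; eexists.
Qed.

Lemma tauK k w : tau n k ++ (tau n k ++ w) =t= w.
Proof. by rewrite catA tau_tau. Qed.

Lemma letter_tau (x : tw_gen n) b : [:: (x, b)] =t= tau n (val x).
Proof.
rewrite tau_val; case: b => //.
by rewrite -[[:: (x, true)]]cats0 -(tau_tau (val x)) tau_val cancel_cons.
Qed.

Lemma tauC_cat a b w : far a b -> tau n a ++ (tau n b ++ w) =t= tau n b ++ (tau n a ++ w).
Proof.
move=> ab; rewrite !catA.
case a_ok: (0 < a < n); last by rewrite (tau_invalid (k := a)) ?a_ok ?cats0.
case b_ok: (0 < b < n); last by rewrite (tau_invalid (k := b)) ?b_ok ?cats0.
rewrite (tau_valid a_ok) (tau_valid b_ok); apply: ge_cat => //; apply: ge_rel; right.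
by exists (exist _ a a_ok), (exist _ b b_ok); split => //; case/orP: ab => ->; [left|right].
Qed.

Lemma taus_cat S1 S2 : taus (S1 ++ S2) = taus S1 ++ taus S2.
Proof. by rewrite map_cat flatten_cat. Qed.

Lemma tau_tausC_cat a S w : all (far a) S -> tau n a ++ (taus S ++ w) =t= taus S ++ (tau n a ++ w).
Proof. by elim: S => [|b S IH] //= /andP [ab aS]; rewrite -!catA tauC_cat // IH. Qed.

Lemma tau_tausC a S : all (far a) S -> tau n a ++ taus S =t= taus S ++ tau n a.
Proof. by move=> aS; have := tau_tausC_cat [::] aS; rewrite !cats0. Qed.

Lemma taus_revK S w : taus (rev S) ++ (taus S ++ w) =t= w.
Proof.
elim: S w => [|a S IH] w //=.
by rewrite rev_cons -cats1 taus_cat /= cats0 -!catA tauK IH.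
Qed.

Lemma winv_tau k : winv (tau n k) =t= tau n k.
Proof.
case k_ok: (0 < k < n); last by rewrite tau_invalid ?k_ok.
by rewrite tau_valid /winv /=; have := letter_tau (exist _ k k_ok) true; rewrite tau_val.
Qed.

Lemma winv_taus S : winv (taus S) =t= taus (rev S).
Proof.
elim: S => [|a S IH] //=.
by rewrite winv_cat rev_cons -cats1 taus_cat /= cats0 IH winv_tau.
Qed.

Lemma winv_beta_word S j :
  winv (beta_word n S j) =t=
  taus S ++ tau n j ++ tau n j.+1 ++ tau n j ++ tau n j.+1 ++ taus (rev S).
Proof. by rewrite /beta_word !winv_cat !winv_tau winv_taus revK !winv_taus -!catA. Qed.

Lemma beta_word_cat S1 S2 t :
  beta_word n (S1 ++ S2) t = taus S1 ++ beta_word n S2 t ++ taus (rev S1).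
Proof. by rewrite /beta_word rev_cat !taus_cat -!catA. Qed.

Lemma beta_word_cons a S t : beta_word n (a :: S) t = tau n a ++ beta_word n S t ++ tau n a.
Proof. by rewrite -cat1s beta_word_cat /= !cats0. Qed.

Lemma tau_beta_wordC j S t : all (far j) S -> j.+2 <= t ->
  tau n j ++ beta_word n S t =t= beta_word n S t ++ tau n j.
Proof.
move=> jS jt; have jSr : all (far j) (rev S) by rewrite all_rev.
have jt1 : far j t.+1 by rewrite /far (leq_trans jt).
have jt0 : far j t by rewrite /far jt.
rewrite /beta_word -!catA tau_tausC_cat //.
rewrite (tauC_cat _ jt1) (tauC_cat _ jt0) (tauC_cat _ jt1) (tauC_cat _ jt0).
by rewrite tau_tausC.
Qed.

Lemma beta_word_drop S t j : sorted ltn S -> j \in S -> j.+1 \notin S -> j.+2 <= t ->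
  beta_word n S t =t= beta_word n (filter (predC1 j) S) t.
Proof.
move=> sS jS j1S jt; have [A [B [eS Aj Bj]]] := sorted_ltn_split sS jS; subst S.
have farB : all (far j) B.
  apply/allP => x xB; rewrite /far ltn_neqAle (allP Bj x xB) andbT.
  by apply/orP; left; apply: contraNneq j1S => ->; rewrite mem_cat inE xB !orbT.
rewrite filter_cat /= eqxx.
have /all_filterP -> : all (predC1 j) A by apply: sub_all Aj => x xj /=; rewrite ltn_eqF.
have /all_filterP -> : all (predC1 j) B by apply: sub_all Bj => x xj /=; rewrite gtn_eqF.
rewrite !beta_word_cat beta_word_cons [tau n j ++ (beta_word _ _ _ ++ _)]catA.
by rewrite tau_beta_wordC // -[(beta_word _ _ _ ++ _) ++ _]catA tau_tau cats0.
Qed.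

Lemma beta_word_conj S t j : sorted ltn S -> j \in S -> j.+1 \in S -> j.+2 <= t ->
  beta_word n S t =t=
  winv (beta_word n (filter (fun i => i < j) S) j) ++
  beta_word n (filter (predC1 j) S) t ++ beta_word n (filter (fun i => i < j) S) j.
Proof.
move=> sS jS j1S jt; have [A [B [eS Aj Bj]]] := sorted_ltn_split sS jS; subst S.
have j1B : j.+1 \in B.
  move: j1S; rewrite mem_cat inE (gtn_eqF (ltnSn j)) /= => /orP [j1A|//].
  by have := allP Aj _ j1A; rewrite ltnNge leqnSn.
have [B' [eB B'j]] := sorted_ltn_succ (cat_sorted2 sS).2 j1B; subst B.
have -> : filter (fun i => i < j) (A ++ j :: j.+1 :: B') = A.
  rewrite filter_cat /= ltnn ltnNge leqnSn /= (all_filterP Aj).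
  rewrite (@eq_in_filter _ _ pred0) ?filter_pred0 ?cats0 // => x /(allP B'j) /= j1x.
  by apply/negbTE; rewrite -leqNgt ltnW // ltnW.
have -> : filter (predC1 j) (A ++ j :: j.+1 :: B') = A ++ j.+1 :: B'.
  rewrite filter_cat /= eqxx (gtn_eqF (ltnSn j)).
  have /all_filterP -> : all (predC1 j) A by apply: sub_all Aj => x xj /=; rewrite ltn_eqF.
  have /all_filterP -> // : all (predC1 j) B'.
  by apply: sub_all B'j => x xj /=; rewrite gtn_eqF // ltnW.
have farB' : all (far j) B' by apply: sub_all B'j => x xj; rewrite /far xj.
have := tau_beta_wordC farB' jt.
rewrite winv_beta_word !beta_word_cat !beta_word_cons [beta_word n A j]/beta_word.
move: (beta_word n B' t) => b bC.
rewrite -!catA taus_revK tauK taus_revK tauK.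
by rewrite [tau n j ++ (b ++ _)]catA bC -catA tauK.
Qed.
End TwinGroup.

Lemma ev_cat n (u v : word (bgen n)) : ev (u ++ v) = ev u ++ ev v.
Proof. by rewrite /ev map_cat flatten_cat. Qed.

Lemma ev_geqv n (w1 w2 : word (bgen n)) :
  geqv (@RB n) w1 w2 -> geqv (@RTW n) (ev w1) (ev w2).
Proof.
elim=> {w1 w2} [w|u v _ IH|u v w _ IH1 _ IH2|u u' v v' _ IH1 _ IH2|a b|u v].
- by [].
- exact: ge_sym.
- exact: ge_trans IH1 IH2.
- by rewrite !ev_cat; apply: ge_cat.
- by case: b; rewrite /ev /= cats0 ?catVw ?catwV.
- case=> [[[S t] g_ok]] [g' [h [j /= [j0 jt eg' eh rel]]]].
  have sS : sorted ltn S by case/and4P: (g_ok).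
  case: rel => [[jS [j1S [-> ->]]]|[jS [j1S [-> ->]]]]; rewrite /ev /beta /= eg' ?eh !cats0.
    exact: beta_word_drop.
  exact: beta_word_conj.
Qed.

(* Coset labels: [flip T i] is the label of the coset of a word with label T
   followed by tau_i. *)
Definition flip (T : pred nat) (i : nat) : pred nat := fun k => T k (+) (k == i).
Definition flips (T : pred nat) (s : seq nat) : pred nat := foldl flip T s.

Lemma flipK (T : pred nat) a : flip (flip T a) a = T.
Proof. by apply: functional_extensionality => k; rewrite /flip addbK. Qed.

Lemma flipC (T : pred nat) a b : flip (flip T a) b = flip (flip T b) a.
Proof. by apply: functional_extensionality => k; rewrite /flip addbAC. Qed.

Lemma flipE (T : pred nat) a k : k != a -> flip T a k = T k.
Proof. by rewrite /flip => /negbTE ->; rewrite addbF. Qed.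

Lemma flip_id (T : pred nat) a : flip T a a = ~~ T a.
Proof. by rewrite /flip eqxx addbT. Qed.

Lemma flips_cat (T : pred nat) s1 s2 : flips T (s1 ++ s2) = flips (flips T s1) s2.
Proof. exact: foldl_cat. Qed.

Lemma flipsE (T : pred nat) s : flips T s = fun k => T k (+) odd (count_mem k s).
Proof.
elim: s T => [|a s IH] T /=; first by apply: functional_extensionality => k; rewrite addbF.
by rewrite IH; apply: functional_extensionality => k; rewrite /flip oddD oddb eq_sym addbA.
Qed.

Lemma filter_flip (T : pred nat) i s : i \notin s -> filter (flip T i) s = filter T s.
Proof. by move=> iNs; apply: eq_in_filter => k ks; apply: flipE; apply: contraNneq iNs => <-. Qed.

Lemma filter_flip_predC1 (T : pred nat) i s :
  T i -> filter (flip T i) s = filter (predC1 i) (filter T s).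
Proof.
move=> Ti; rewrite -filter_predI; apply: eq_filter => k /=.
by case: (eqVneq k i) => [->|ki]; rewrite ?flip_id ?Ti ?flipE ?andbT.
Qed.

Definition predUs (T : pred nat) (S : seq nat) : pred nat := fun k => T k || (k \in S).
Definition label0 : pred nat := fun _ => false.

Lemma flips_abab (T : pred nat) a b : flips T [:: a; b; a; b] = T.
Proof. by rewrite /flips /= (flipC (flip T a) b a) !flipK. Qed.

Section SchreierRewriting.
Variable n : nat.
Local Notation "u =t= v" := (geqv (@RTW n) u v) (at level 70).
Local Notation "u =b= v" := (geqv (@RB n) u v) (at level 70).
Local Notation taus S := (flatten (map (tau n) S)).

Lemma bgen_ok_filter_iota (T : pred nat) j : 0 < j -> j <= n.-2 ->
  bgen_ok n (filter T (iota 1 j.-1), j).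
Proof.
move=> j0 jn; rewrite /bgen_ok /= j0 jn sorted_filter ?iota_ltn_sorted //=; last exact: ltn_trans.
by apply/allP => k; rewrite mem_filter mem_iota => /andP [_ /andP [k0 kj]]; rewrite k0 /=; lia.
Qed.

Definition schreier (T : pred nat) (i : nat) : word (bgen n) :=
  if T i.+1 then
    if (insub (filter T (iota 1 i.-1), i) : option (bgen n)) is Some g
    then [:: (g, T i)] else [::]
  else [::].

Fixpoint schreier_word (T : pred nat) (s : seq nat) : word (bgen n) :=
  if s is i :: s' then schreier T i ++ schreier_word (flip T i) s' else [::].

Lemma schreier_word_cat (T : pred nat) s1 s2 :
  schreier_word T (s1 ++ s2) = schreier_word T s1 ++ schreier_word (flips T s1) s2.
Proof. by elim: s1 T => [|a s IH] T //=; rewrite IH catA. Qed.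

Lemma schreier_of_val (T : pred nat) j (g : bgen n) :
  val g = (filter T (iota 1 j.-1), j) -> T j.+1 -> schreier T j = [:: (g, T j)].
Proof.
case: g => [[S j'] g_ok] /= [eS ej] Tj1; subst S j'.
by rewrite /schreier Tj1 (insubT (bgen_ok n) g_ok).
Qed.

Lemma schreierE (T : pred nat) i : 0 < i -> i <= n.-2 -> T i.+1 ->
  exists g : bgen n, val g = (filter T (iota 1 i.-1), i) /\ schreier T i = [:: (g, T i)].
Proof.
move=> i0 iN Ti1; exists (Sub _ (bgen_ok_filter_iota T i0 iN)).
by split => //; apply: schreier_of_val.
Qed.

Lemma schreierF (T : pred nat) i : T i.+1 = false -> schreier T i = [::].
Proof. by rewrite /schreier => ->. Qed.

Lemma schreier_nil (T : pred nat) i : ~~ [&& T i.+1, 0 < i & i <= n.-2] -> schreier T i = [::].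
Proof.
rewrite /schreier; case: (T i.+1) => //= iN; rewrite insubF //; apply/negbTE.
by apply: contra iN => /and4P [/= -> ->].
Qed.

Lemma schreier_flip (T : pred nat) i : schreier (flip T i) i = winv (schreier T i).
Proof.
have iNiota : i \notin iota 1 i.-1 by rewrite mem_iota; lia.
rewrite /schreier flipE ?gtn_eqF // flip_id filter_flip //.
by case: (T i.+1) => //; case: insubP.
Qed.

Lemma schreier_flip_far (T : pred nat) i j : i.+1 < j -> schreier (flip T j) i = schreier T i.
Proof.
move=> ij; have jNiota : j \notin iota 1 i.-1 by rewrite mem_iota; lia.
by rewrite /schreier !flipE ?filter_flip // ltn_eqF // ltnW.
Qed.

Lemma filter_lt_iota (T : pred nat) i j : 0 < i -> i < j ->
  filter (fun k => k < i) (filter T (iota 1 j.-1)) = filter T (iota 1 i.-1).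
Proof.
move=> i0 ij; have lt_iota : filter (fun k => k < i) (iota 1 j.-1) = iota 1 i.-1.
  by have := @filter_iota_ltn 1 j.-1 i.-1; rewrite add1n prednK //; apply; lia.
rewrite -filter_predI -lt_iota -filter_predI; apply: eq_filter => k /=; exact: andbC.
Qed.

(* Relation (i) if i+1 is not in T, relation (ii) if it is. *)
Lemma schreier_conj (T : pred nat) i j (g g' : bgen n) : T i -> 0 < i -> i.+1 < j ->
  val g = (filter T (iota 1 j.-1), j) -> val g' = (filter (flip T i) (iota 1 j.-1), j) ->
  [:: (g, false)] =b= schreier T i ++ [:: (g', false)] ++ winv (schreier T i).
Proof.
move=> Ti i0 ij eg eg'.
have iN : i <= n.-2 by have := valP g; rewrite /bgen_ok eg => /and4P [_ /= jn _ _]; lia.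
have iS : i \in filter T (iota 1 j.-1) by rewrite mem_filter Ti mem_iota; lia.
have i1S : (i.+1 \in filter T (iota 1 j.-1)) = T i.+1.
  by rewrite mem_filter mem_iota (_ : 1 <= i.+1 < 1 + j.-1) ?andbT //; lia.
have eg'C : val g' = (filter (predC1 i) (filter T (iota 1 j.-1)), j).
  by rewrite eg' filter_flip_predC1.
case Ti1: (T i.+1).
- have [h [eh ->]] := schreierE i0 iN Ti1; rewrite Ti.
  apply: ge_rel; exists g, g', h, i; rewrite /= eg /=; split => //.
  + by rewrite eh filter_lt_iota // ltnW.
  + by right; rewrite i1S Ti1.
- pose h : bgen n := Sub _ (bgen_ok_filter_iota T i0 iN).
  rewrite schreierF //=.
  apply: ge_rel; exists g, g', h, i; rewrite /= eg /=; split => //.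
  + by rewrite filter_lt_iota // ltnW.
  + by left; rewrite i1S Ti1.
Qed.

Lemma schreier_comm (T : pred nat) i j : 0 < i -> i.+1 < j ->
  schreier T i ++ schreier (flip T i) j =b= schreier T j ++ schreier (flip T j) i.
Proof.
move=> i0 ij; rewrite (schreier_flip_far T ij).
(* Replacing T by flip T i inverts schreier T i and exchanges the two sides. *)
wlog Ti : T / T i.
  move=> comm; case/boolP: (T i) => [|NTi]; first exact: comm.
  have := comm (flip T i); rewrite flip_id NTi flipK schreier_flip => /(_ isT).
  exact: geqv_comm_winv.
have [Tj1 Tj] : flip T i j.+1 = T j.+1 /\ flip T i j = T j.
  by split; apply: flipE; lia.
case jgen: [&& T j.+1, 0 < j & j <= n.-2]; last first.
  rewrite (schreier_nil (T := T) (i := j)) ?jgen // (schreier_nil (T := flip T i) (i := j)).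
    by rewrite cats0.
  by rewrite Tj1 jgen.
case/and3P: jgen => Tj1' j0 jn.
have [g [eg ->]] := schreierE j0 jn Tj1'.
have [g' [eg' ->]] : exists g' : bgen n, val g' = (filter (flip T i) (iota 1 j.-1), j) /\
    schreier (flip T i) j = [:: (g', flip T i j)] by apply: schreierE; rewrite ?Tj1.
by rewrite Tj; apply: ge_sym; apply: geqv_conj; exact: schreier_conj eg eg'.
Qed.

Definition indices (u : word (tw_gen n)) : seq nat := map (fun p => val p.1) u.

Lemma indices_cat u v : indices (u ++ v) = indices u ++ indices v.
Proof. exact: map_cat. Qed.

Lemma indices_winv u : indices (winv u) = rev (indices u).
Proof. by rewrite /indices /winv map_rev -map_comp. Qed.

Lemma indices_taus S : all (fun k => 0 < k < n) S -> indices (taus S) = S.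
Proof.
elim: S => [|a S IH] //= /andP [a_ok S_ok].
by rewrite indices_cat (tau_valid a_ok) IH.
Qed.

Lemma flips_geqv u v : u =t= v -> forall T, flips T (indices u) = flips T (indices v).
Proof.
elim=> {u v} [//|u v _ IH|u v w _ IH1 _ IH2|u u' v v' _ IH1 _ IH2|a b|u v rel] T.
- by rewrite IH.
- by rewrite IH1 IH2.
- by rewrite !indices_cat !flips_cat IH1 IH2.
- exact: flipK.
- by case: rel => [[i [-> ->]]|[i [j [_ [-> ->]]]]]; [exact: flipK|exact: flipC].
Qed.

Lemma schreier_word_geqv u v :
  u =t= v -> forall T, schreier_word T (indices u) =b= schreier_word T (indices v).
Proof.
have schreierK T a : schreier T a ++ schreier (flip T a) a =b= [::].
  by rewrite schreier_flip catwV.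
elim=> {u v} [//|u v _ IH|u v w _ IH1 _ IH2|u u' v v' uu' IH1 _ IH2|a b|u v rel] T.
- exact: ge_sym.
- exact: ge_trans (IH1 T) (IH2 T).
- by rewrite !indices_cat !schreier_word_cat (flips_geqv uu'); apply: ge_cat.
- by rewrite /= cats0 schreierK.
- case: rel => [[i [-> ->]]|[[i i_ok] [[j j_ok] [/= ij [-> ->]]]]] /=; rewrite ?cats0.
    exact: schreierK.
  case/andP: i_ok => i0 _; case/andP: j_ok => j0 _.
  by case: ij => ij; [|apply: ge_sym]; apply: schreier_comm.
Qed.

Lemma schreier_word_sorted (T : pred nat) m S : (forall k, m <= k -> T k = false) ->
  sorted ltn S -> all (leq m) S -> schreier_word T S = [::] /\ flips T S = predUs T S.
Proof.
elim: S T m => [|s S IH] T m Tm sS /=.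
  by split => //; apply: functional_extensionality => k; rewrite /predUs orbF.
case/andP=> ms mS; have [sS' sS_gt] := (path_sorted sS, order_path_min ltn_trans sS).
have Ts : forall k, s.+1 <= k -> flip T s k = false.
  by move=> k sk; rewrite flipE ?Tm ?gtn_eqF // (leq_trans ms) // ltnW.
have [-> ->] := IH _ _ Ts sS' sS_gt; rewrite schreierF ?cats0 ?Tm //; last exact: leqW.
split => //; apply: functional_extensionality => k; rewrite /predUs inE /flip.
by case: (eqVneq k s) => [->|_]; rewrite ?addbF // (Tm s ms).
Qed.

Lemma schreier_word_sorted_rev (T : pred nat) m S : (forall k, m <= k -> T k = false) ->
  sorted ltn S -> all (leq m) S ->
  schreier_word (predUs T S) (rev S) = [::] /\ flips (predUs T S) (rev S) = T.
Proof.
elim: S T m => [|s S IH] T m Tm sS /=.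
  by split => //; apply: functional_extensionality => k; rewrite /predUs orbF.
case/andP=> ms mS; have [sS' sS_gt] := (path_sorted sS, order_path_min ltn_trans sS).
pose T' := predUs T [:: s].
have T's : forall k, s.+1 <= k -> T' k = false.
  by move=> k sk; rewrite /T' /predUs inE Tm ?gtn_eqF // (leq_trans ms) // ltnW.
have -> : predUs T (s :: S) = predUs T' S.
  by apply: functional_extensionality => k; rewrite /predUs /T' /predUs !inE orbA.
have [IH1 IH2] := IH _ _ T's sS' sS_gt.
rewrite rev_cons -cats1 schreier_word_cat flips_cat IH1 IH2 /= schreierF; last first.
  by rewrite /T' /predUs inE gtn_eqF ?Tm // leqW.
split => //; apply: functional_extensionality => k; rewrite /flip /T' /predUs inE.
by case: (eqVneq k s) => [->|_]; rewrite ?addbF ?orbF // orbT (Tm s ms).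
Qed.

Lemma schreier_word_beta_core (T : pred nat) j (g : bgen n) :
  T j = false -> T j.+1 = false -> T j.+2 = false -> val g = (filter T (iota 1 j.-1), j) ->
  schreier_word T [:: j.+1; j; j.+1; j] = [:: (g, false)] /\
  schreier_word T [:: j; j.+1; j; j.+1] = [:: (g, true)].
Proof.
move=> Tj Tj1 Tj2 eg.
have [jN j1N] : j \notin iota 1 j.-1 /\ j.+1 \notin iota 1 j.-1 by rewrite !mem_iota; lia.
have [ne01 ne10 ne20 ne21] :
    [/\ (j == j.+1) = false, (j.+1 == j) = false, (j.+2 == j) = false & (j.+2 == j.+1) = false].
  by split; [apply: ltn_eqF | apply: gtn_eqF ..].
have gen (T' : pred nat) : T' j.+1 -> filter T' (iota 1 j.-1) = filter T (iota 1 j.-1) ->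
    schreier T' j = [:: (g, T' j)].
  by move=> T'j1 eT'; rewrite (schreier_of_val (g := g)) ?eT'.
split; rewrite /= cats0 schreierF // gen ?filter_flip //.
all: rewrite ?schreierF; rewrite /flip ?eqxx ?ne01 ?ne10 ?ne20 ?ne21 ?Tj ?Tj1 ?Tj2 //.
Qed.

Lemma filter_predUs_iota S j : sorted ltn S -> all (fun k => 0 < k < j) S ->
  filter (predUs label0 S) (iota 1 j.-1) = S.
Proof.
move=> sS S_ok; apply: (irr_sorted_eq ltn_trans ltnn) => //.
  by rewrite sorted_filter ?iota_ltn_sorted //; exact: ltn_trans.
move=> k; rewrite mem_filter /predUs /= mem_iota.
by case kS: (k \in S); rewrite ?andbF //; have := allP S_ok k kS; lia.
Qed.

Lemma schreier_word_conj S m : sorted ltn S -> all (leq 1) S ->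
  flips (predUs label0 S) m = predUs label0 S ->
  schreier_word label0 (S ++ m ++ rev S) = schreier_word (predUs label0 S) m /\
  flips label0 (S ++ m ++ rev S) = label0.
Proof.
move=> sS S1 fm; have T0 : forall k, 1 <= k -> label0 k = false by [].
have [r1 f1] := schreier_word_sorted T0 sS S1; have [r2 f2] := schreier_word_sorted_rev T0 sS S1.
by rewrite !schreier_word_cat !flips_cat r1 f1 fm r2 f2 cats0.
Qed.

Lemma schreier_word_beta (g : bgen n) :
  [/\ schreier_word label0 (indices (beta g)) = [:: (g, false)],
      flips label0 (indices (beta g)) = label0,
      schreier_word label0 (indices (winv (beta g))) = [:: (g, true)] &
      flips label0 (indices (winv (beta g))) = label0].
Proof.
have := valP g; case eg: (val g) => [S j] /and4P [/= j0 jn sS S_ok].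
have S_n : all (fun k => 0 < k < n) S by apply: sub_all S_ok => k; lia.
have S1 : all (leq 1) S by apply: sub_all S_ok => k /andP [].
have tau1 k : 0 < k < n -> taus [:: k] = tau n k by rewrite /= cats0.
have ind : indices (beta g) = S ++ [:: j.+1; j; j.+1; j] ++ rev S.
  by rewrite /beta eg /beta_word !indices_cat -!tau1 ?indices_taus ?all_rev //=; lia.
have indV : indices (winv (beta g)) = S ++ [:: j; j.+1; j; j.+1] ++ rev S.
  by rewrite indices_winv ind !rev_cat revK -catA.
have [T0 T1 T2] : [/\ predUs label0 S j = false, predUs label0 S j.+1 = false &
                      predUs label0 S j.+2 = false].
  by split; apply/negbTE/negP => /(allP S_ok); lia.
have [r1 r2] := schreier_word_beta_core T0 T1 T2 (etrans eg (congr1 (pair^~ j)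
  (esym (filter_predUs_iota sS S_ok)))).
have [c1 f1] := schreier_word_conj sS S1 (flips_abab _ j.+1 j).
have [c2 f2] := schreier_word_conj sS S1 (flips_abab _ j j.+1).
by rewrite ind indV c1 c2 r1 r2.
Qed.

Lemma schreier_word_ev (w : word (bgen n)) :
  schreier_word label0 (indices (ev w)) = w /\ flips label0 (indices (ev w)) = label0.
Proof.
elim: w => [|[g b] w [IH1 IH2]] //.
have [r f rV fV] := schreier_word_beta g.
rewrite -cat1s ev_cat indices_cat schreier_word_cat flips_cat.
by case: b; rewrite /ev /= cats0 ?r ?f ?rV ?fV IH1 IH2.
Qed.

Lemma ev_geqv_inj (w1 w2 : word (bgen n)) : ev w1 =t= ev w2 -> w1 =b= w2.
Proof.
move=> /schreier_word_geqv /(_ label0).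
by rewrite (schreier_word_ev w1).1 (schreier_word_ev w2).1.
Qed.

Definition coset_rep (T : pred nat) : word (tw_gen n) := taus (filter T (iota 1 n.-1)).

Lemma coset_rep0 : coset_rep label0 = [::].
Proof. by rewrite /coset_rep filter_pred0. Qed.

Lemma coset_rep_tau (T : pred nat) i : 0 < i < n ->
  coset_rep T ++ tau n i =t= ev (schreier T i) ++ coset_rep (flip T i).
Proof.
case/andP=> i0 iN; rewrite /coset_rep.
have -> : iota 1 n.-1 = iota 1 i.-1 ++ i :: iota i.+1 (n.-1 - i).
  by rewrite {1}(_ : n.-1 = i.-1 + (n.-1 - i).+1) ?iotaD ?add1n ?prednK //; lia.
have iNl : i \notin iota 1 i.-1 by rewrite mem_iota; lia.
have iNr : i \notin iota i.+1 (n.-1 - i) by rewrite mem_iota; lia.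
rewrite !filter_cat !taus_cat /= !filter_flip // flip_id.
set L := filter T (iota 1 i.-1); case: (ltnP i n.-1) => [iN1|iN1]; last first.
  have -> : n.-1 - i = 0 by lia.
  rewrite schreier_nil /=; last by apply/negP => /and3P [_ _]; lia.
  by case: (T i); rewrite /= ?cats0 // -catA tau_tau cats0.
have -> : n.-1 - i = (n.-1 - i.+1).+1 by lia.
rewrite /=; set R := filter T (iota i.+2 (n.-1 - i.+1)).
have farR : all (far i) R.
  by apply/allP => k; rewrite mem_filter mem_iota /far => /andP [_ /andP [-> _]].
have iN2 : i <= n.-2 by lia.
case Ti1: (T i.+1); last first.
  rewrite schreierF //; case: (T i); rewrite /= -!catA.
  - by rewrite tau_tausC_cat // tau_tau cats0.
  - by rewrite tau_tausC.
have [h [eh ->]] := schreierE i0 iN2 Ti1; rewrite /ev /= /beta eh /= cats0.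
case: (T i) => /=.
- by rewrite winv_beta_word -!catA taus_revK tauK tau_tausC.
- by rewrite /beta_word -!catA taus_revK tauK tauK tau_tausC.
Qed.

Lemma coset_rep_cat (T : pred nat) u :
  coset_rep T ++ u =t= ev (schreier_word T (indices u)) ++ coset_rep (flips T (indices u)).
Proof.
elim: u T => [|[x b] u IH] T; first by rewrite /= cats0.
rewrite /= ev_cat -cat1s catA letter_tau coset_rep_tau ?(valP x) //.
by rewrite -!catA IH.
Qed.

Lemma flips_commutators (T : pred nat) (ps : seq (word (tw_gen n) * word (tw_gen n))) :
  flips T (indices (flatten (map (fun p => wcomm p.1 p.2) ps))) = T.
Proof.
elim: ps T => [|[x y] ps IH] T //=.
rewrite indices_cat flips_cat IH flipsE; apply: functional_extensionality => k.
rewrite /wcomm !indices_cat !indices_winv !count_cat !count_rev.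
by rewrite addnA addnn odd_double addbF.
Qed.

Lemma in_commutator_geqv (u v : word (tw_gen n)) :
  u =t= v -> in_commutator v -> in_commutator u.
Proof. by move=> uv [ps vE]; exists ps; apply: ge_trans vE. Qed.

Lemma in_commutator_cat (u v : word (tw_gen n)) :
  in_commutator u -> in_commutator v -> in_commutator (u ++ v).
Proof.
move=> [ps uE] [qs vE]; exists (ps ++ qs).
by rewrite map_cat flatten_cat; apply: ge_cat.
Qed.

Lemma in_commutator_conj (x a b : word (tw_gen n)) : in_commutator (x ++ wcomm a b ++ winv x).
Proof.
exists [:: (a, b); (wcomm a b, winv x)]; rewrite /= cats0.
by set c := wcomm a b; rewrite /wcomm winvK catwVK.
Qed.

Lemma in_commutator_beta (g : bgen n) :
  in_commutator (beta g) /\ in_commutator (winv (beta g)).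
Proof.
rewrite /beta; set S := (val g).1; set j := (val g).2; split.
- apply: in_commutator_geqv (in_commutator_conj (taus S) (tau n j.+1) (tau n j)).
  by rewrite /beta_word /wcomm !winv_tau winv_taus -!catA.
- apply: in_commutator_geqv (in_commutator_conj (taus S) (tau n j) (tau n j.+1)).
  by rewrite winv_beta_word /wcomm !winv_tau winv_taus -!catA.
Qed.

Lemma in_commutator_ev (w : word (bgen n)) : in_commutator (ev w).
Proof.
elim: w => [|[g b] w IH]; first by exists [::].
rewrite -cat1s ev_cat; apply: in_commutator_cat => //.
by case: b (in_commutator_beta g) => [] [? ?]; rewrite /ev /= cats0.
Qed.

End SchreierRewriting.

Theorem lemma3p3 (n : nat) (hn : (3 <= n)%N) :
  (forall w1 w2 : word (bgen n),
      geqv (@RB n) w1 w2 -> geqv (@RTW n) (ev w1) (ev w2)) /\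
  (forall w1 w2 : word (bgen n),
      geqv (@RTW n) (ev w1) (ev w2) -> geqv (@RB n) w1 w2) /\
  (forall u : word (tw_gen n),
      in_commutator u <-> exists w : word (bgen n), geqv (@RTW n) u (ev w)).
Proof.
split; first exact: ev_geqv.
split; first exact: ev_geqv_inj.
move=> u; split => [[ps uE]|[w uE]]; last exact: in_commutator_geqv uE (in_commutator_ev w).
exists (schreier_word n label0 (indices u)).
have := coset_rep_cat label0 u.
by rewrite (flips_geqv uE) flips_commutators coset_rep0 cats0.
Qed.
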